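(* Let $G$ be a connected Cartesian-prime graph with at least two vertices, and put $n=|V(G)|$, $m=|E(G)|$. Let $$r=\max\{\,|\beta|_e\cdot n+|\beta|\cdot m \;:\; \beta\in\mathrm{Aut}(G)\setminus\{\mathrm{id}\}\,\},$$ with $r=0$ if $\mathrm{Aut}(G)$ is trivial. Then $$\theta'(G\,\square\, G)=\max\{\,n\cdot m,\ r\,\}+1.$$
   Context: All graphs are finite and simple. $\square$ denotes the Cartesian product. A graph is (Cartesian) prime if it is not isomorphic to a Cartesian product of two graphs each with at least two vertices. For an automorphism $\beta$ (acting on edges by $\beta(uv)=\beta(u)\beta(v)$), $|\beta|$ is the number of cycles (including fixed points) of $\beta$ on $V(G)$, and $|\beta|_e$ is the number of cycles of $\beta$ on $E(G)$. An edge coloring with $k$ colors is a surjective map onto $\{1,\dots,k\}$. It is distinguishing if only the identity automorphism preserves all edge colors. $\theta'(H)$ is the least $k$ such that every edge coloring of $H$ using exactly $k$ colors is distinguishing. *)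

From mathcomp Require Import all_boot all_order all_fingroup.
Set Implicit Arguments. Unset Strict Implicit. Unset Printing Implicit Defensive.

Section Graphs.
Variable T : finType.

Definition simple_graph (e : rel T) := symmetric e /\ irreflexive e.

Definition connected_graph (e : rel T) := forall x y : T, connect e x y.

Definition edges (e : rel T) : {set {set T}} :=
  [set [set x; y] | x in [set: T], y in [set y | e x y]].

Definition is_aut (e : rel T) (s : {perm T}) : bool :=
  [forall x, forall y, e (s x) (s y) == e x y].

(* |beta|: number of cycles (incl. fixed points) on V *)
Definition vcycles (s : {perm T}) : nat := #|porbits s|.

(* |beta|_e: number of cycles of beta acting on E by beta(uv) = beta(u)beta(v) *)
Definition ecycles (e : rel T) (s : {perm T}) : nat :=
  #|[set [set Y in edges e | fconnect (fun A : {set T} => s @: A) X Y]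
      | X in edges e]|.

(* edge colouring with exactly k colours (colours 'I_k, i.e. {0..k-1}),
   values of c on non-edges are irrelevant *)
Definition edge_coloring (e : rel T) k (c : {set T} -> 'I_k) :=
  forall i : 'I_k, exists2 X, X \in edges e & c X = i.

Definition distinguishing (e : rel T) k (c : {set T} -> 'I_k) :=
  forall s : {perm T}, is_aut e s ->
    (forall X, X \in edges e -> c (s @: X) = c X) -> s = 1%g.

Definition all_colorings_dist (e : rel T) k :=
  forall c : {set T} -> 'I_k, edge_coloring e c -> distinguishing e c.

Definition theta'_is (e : rel T) (k : nat) :=
  [/\ 0 < k, all_colorings_dist e k &
      forall j, 0 < j < k -> ~ all_colorings_dist e j].
End Graphs.

Definition cart_prod (A B : finType) (eA : rel A) (eB : rel B) : rel (A * B) :=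
  fun u v => (eA u.1 v.1 && (u.2 == v.2)) || ((u.1 == v.1) && eB u.2 v.2).

Definition cart_prime (T : finType) (e : rel T) :=
  ~ exists (A B : finType) (eA : rel A) (eB : rel B) (f : T -> A * B),
      [/\ simple_graph eA, simple_graph eB, 1 < #|A|, 1 < #|B| &
          bijective f /\ forall x y, e x y = cart_prod eA eB (f x) (f y)].

Definition r_param (T : finType) (e : rel T) : nat :=
  \max_(s : {perm T} | is_aut e s && (s != 1%g))
     (ecycles e s * #|T| + vcycles s * #|edges e|).

From mathcomp Require Import all_boot all_order all_fingroup.
Set Implicit Arguments. Unset Strict Implicit. Unset Printing Implicit Defensive.

(* An automorphism of [G [] G] maps every [G]-layer into a [G]-layer: in the
   image of a layer, horizontal and vertical steps commute, so an image meeting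
   several rows and several columns would exhibit [G] as a nontrivial Cartesian
   product.  Hence, [G] being connected and prime, every automorphism is
   [(x, y) |-> (al x, be y)] or [(x, y) |-> (be y, al x)].  For the first kind
   with [al != 1], every edge orbit contains a horizontal edge built from an
   [al]-orbit of edges and a vertex, or a vertical edge built from an
   [al]-orbit of vertices and an edge; this bounds the number of edge orbits by
   [|al|_e n + |al| m], with equality when [be = 1].  For the second kind every
   edge orbit contains a vertical edge, giving at most [n m] orbits, with
   equality for the plain swap.  So [max (n m, r)] is the largest number of
   edge orbits of a nontrivial automorphism of [G [] G], and [theta'] exceeds it
   by one: a nontrivial automorphism preserving a colouring forces at most as
   many colours as orbits, while colouring the orbits of a maximizing
   automorphism gives non-distinguishing colourings with any smaller number of
   colours. *)

Local Notation setmap s := (fun A : {set _} => s @: A).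

Section Automorphisms.
Variables (U : finType) (r : rel U).
Implicit Types (s t : {perm U}) (A B X : {set U}).

Lemma is_autP s : reflect (forall x y, r (s x) (s y) = r x y) (is_aut r s).
Proof.
apply: (iffP forallP) => [s_aut x y | s_aut x]; last first.
  by apply/forallP => y; rewrite s_aut.
by move: (s_aut x) => /forallP/(_ y)/eqP.
Qed.

Lemma autE s x y : is_aut r s -> r (s x) (s y) = r x y.
Proof. by move/is_autP. Qed.

Lemma is_aut1 : is_aut r 1%g.
Proof. by apply/is_autP => x y; rewrite !perm1. Qed.

Lemma is_autM s t : is_aut r s -> is_aut r t -> is_aut r (s * t)%g.
Proof. by move=> s_aut t_aut; apply/is_autP => x y; rewrite !permM !autE. Qed.

Lemma is_autV s : is_aut r s -> is_aut r s^-1%g.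
Proof. by move=> s_aut; apply/is_autP => x y; rewrite -(autE _ _ s_aut) !permKV. Qed.

Lemma is_autX s k : is_aut r s -> is_aut r (s ^+ k)%g.
Proof.
by move=> s_aut; elim: k => [|k IH]; rewrite ?expg0 ?is_aut1 // expgSr is_autM.
Qed.

Lemma edgesP X : reflect (exists x y, r x y /\ X = [set x; y]) (X \in edges r).
Proof.
apply: (iffP imset2P) => [[x y _ + ->]|[x [y [rxy ->]]]].
  by rewrite inE; exists x, y.
by exists x y; rewrite ?inE.
Qed.

Lemma imset_set2 (V : finType) (f : U -> V) x y : f @: [set x; y] = [set f x; f y].
Proof. by rewrite imsetU1 imset_set1. Qed.

Lemma aut_imset_edge s : is_aut r s -> {homo setmap s : X / X \in edges r}.
Proof.
move=> s_aut X /edgesP[x [y [rxy ->]]]; apply/edgesP; exists (s x), (s y).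
by rewrite autE // imset_set2.
Qed.

Lemma aut_imset_edges s : is_aut r s -> setmap s @: edges r = edges r.
Proof.
move=> s_aut; apply/eqP; rewrite eqEcard card_imset ?leqnn ?andbT.
  by apply/subsetP => _ /imsetP[X XE ->]; apply: aut_imset_edge.
exact/imset_inj/perm_inj.
Qed.

Lemma imset_permKV s A : s @: (s^-1%g @: A) = A.
Proof. by rewrite -imset_comp -[RHS]imset_id; apply: eq_imset => x /=; rewrite permKV. Qed.

Lemma iter_setmap s k A : iter k (setmap s) A = (s ^+ k)%g @: A.
Proof.
elim: k => [|k IH] /=; first by rewrite expg0 imset_perm1.
by rewrite IH -imset_comp expgSr; apply: eq_imset => x; rewrite permM.
Qed.

Lemma fconnect_setmapP s A B :
  reflect (exists k, B = (s ^+ k)%g @: A) (fconnect (setmap s) A B).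
Proof.
apply: (iffP idP) => [/iter_findex <- | [k ->]]; last first.
  by rewrite -iter_setmap fconnect_iter.
by exists (findex (setmap s) A B); rewrite iter_setmap.
Qed.

Lemma fconnect_permP s x y : reflect (exists k, y = (s ^+ k)%g x) (fconnect s x y).
Proof.
apply: (iffP idP) => [/iter_findex <- | [k ->]]; last by rewrite permX fconnect_iter.
by exists (findex s x y); rewrite permX.
Qed.

End Automorphisms.

Section OrbitCounting.
Variables (V : finType) (f : V -> V) (S : {set V}).

Definition orbit_in x := [set y in S | fconnect f x y].
Definition norbits := #|[set orbit_in x | x in S]|.
Definition orbit_reps := [set x in S | froots f x].

Lemma orbit_reps_sub : orbit_reps \subset S.
Proof. by apply/subsetP => x; rewrite inE => /andP[]. Qed.

Lemma mem_orbit_in x : x \in S -> x \in orbit_in x.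
Proof. by move=> xS; rewrite inE xS connect0. Qed.

Hypothesis f_inj : injective f.
Hypothesis f_S : {homo f : x / x \in S}.

Let f_sym : connect_sym (frel f) := fconnect_sym f_inj.

Lemma orbit_in_eq x y : fconnect f x y -> orbit_in x = orbit_in y.
Proof.
move=> xy; apply/setP => z; rewrite !inE; case: (z \in S) => //=.
apply/idP/idP => [xz | yz]; last exact: connect_trans xy yz.
by apply: (connect_trans _ xz); rewrite f_sym.
Qed.

Lemma fconnect_closed x y : fconnect f x y -> x \in S -> y \in S.
Proof. by move=> /iter_findex <-; elim: (findex f x y) => //= k IH /IH/f_S. Qed.

Lemma orbit_repsP x : x \in S -> exists2 r, r \in orbit_reps & fconnect f r x.
Proof.
move=> xS; exists (froot f x); last by rewrite f_sym connect_root.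
by rewrite inE (roots_root f_sym) (fconnect_closed (connect_root _ x)).
Qed.

Lemma orbit_reps_uniq : {in orbit_reps &, forall r r', fconnect f r r' -> r = r'}.
Proof.
move=> r r'; rewrite !inE => /andP[_ /eqP Er] /andP[_ /eqP Er'] /(rootP f_sym).
by rewrite Er Er'.
Qed.

Lemma norbits_le (D : {set V}) :
  (forall x, x \in S -> exists2 d, d \in D & fconnect f d x) -> norbits <= #|D|.
Proof.
move=> D_cover; apply: leq_trans (leq_imset_card orbit_in D).
apply: subset_leq_card; apply/subsetP => _ /imsetP[x xS ->].
have [d dD dx] := D_cover x xS.
by apply/imsetP; exists d; rewrite // (orbit_in_eq dx).
Qed.

Lemma norbits_ge (D : {set V}) : D \subset S ->
  {in D &, forall d d', fconnect f d d' -> d = d'} -> #|D| <= norbits.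
Proof.
move=> sDS D_uniq; rewrite -(card_in_imset (f := orbit_in)); last first.
  move=> d d' dD d'D Edd'; apply: D_uniq => //.
  have := mem_orbit_in (subsetP sDS _ d'D).
  by rewrite -Edd' inE => /andP[].
exact/subset_leq_card/imsetS.
Qed.

Lemma card_orbit_reps : #|orbit_reps| = norbits.
Proof.
apply/anti_leq; rewrite norbits_ge ?norbits_le ?orbit_reps_sub //.
  exact: orbit_repsP.
exact: orbit_reps_uniq.
Qed.

Lemma card_invariant_colors_le (K : finType) (c : V -> K) :
  {in S, forall x, c (f x) = c x} -> #|c @: S| <= norbits.
Proof.
move=> c_inv; rewrite -card_orbit_reps (leq_trans _ (leq_imset_card c _)) //.
apply: subset_leq_card; apply/subsetP => _ /imsetP[x xS ->].
have [r r_rep /iter_findex <-] := orbit_repsP xS.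
have rS := subsetP orbit_reps_sub r r_rep.
apply/imsetP; exists r => //; elim: (findex f r x) => //= k IH.
by rewrite c_inv ?IH // (fconnect_closed (fconnect_iter f k r)).
Qed.

Lemma invariant_coloring j : 0 < j <= norbits ->
  exists c : V -> 'I_j,
    (forall i, exists2 x, x \in S & c x = i) /\ {in S, forall x, c (f x) = c x}.
Proof.
case: j => // j /= j_le.
pose O := [set orbit_in x | x in S].
exists (fun x => inord (minn j (index (orbit_in x) (enum O)))); split; last first.
  by move=> x _; rewrite (orbit_in_eq (fconnect1 f x)).
move=> i; have i_lt : i < size (enum O) by rewrite -cardE; apply: leq_trans j_le.
have : nth set0 (enum O) i \in O by rewrite -mem_enum mem_nth.
case/imsetP => x xS Ex; exists x => //.
rewrite -Ex index_uniq ?enum_uniq //.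
by apply: val_inj; rewrite /= inordK ?ltnS ?geq_minl //; apply/minn_idPr; rewrite -ltnS.
Qed.

End OrbitCounting.

Lemma norbits_conj (V : finType) (f g h : V -> V) (S : {set V}) :
  injective h -> (forall x, h (f x) = g (h x)) -> norbits g (h @: S) = norbits f S.
Proof.
move=> h_inj hf; have iter_h k x : h (iter k f x) = iter k g (h x).
  by elim: k => //= k <-; apply: hf.
have fconnect_h x y : fconnect g (h x) (h y) = fconnect f x y.
  apply/idP/idP => [/iter_findex | /iter_findex <-]; last first.
    by rewrite iter_h fconnect_iter.
  by rewrite -iter_h => /h_inj <-; apply: fconnect_iter.
have orbit_h x : orbit_in g (h @: S) (h x) = h @: orbit_in f S x.
  apply/setP => z; apply/idP/imsetP => [|[y]]; rewrite !inE.
    by case/andP => /imsetP[y yS ->]; rewrite fconnect_h => xy; exists y; rewrite ?inE ?yS.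
  by case/andP => yS xy ->; rewrite imset_f // fconnect_h.
rewrite /norbits -imset_comp (eq_imset _ orbit_h) (imset_comp (setmap h)).
exact/card_imset/imset_inj.
Qed.

Lemma ecyclesE (U : finType) (r : rel U) (s : {perm U}) :
  ecycles r s = norbits (setmap s) (edges r).
Proof. by []. Qed.

Lemma ecycles_conjg (U : finType) (r : rel U) (s t : {perm U}) :
  is_aut r t -> ecycles r (s ^ t)%g = ecycles r s.
Proof.
move=> t_aut; rewrite !ecyclesE -[in LHS](aut_imset_edges t_aut).
apply: (norbits_conj (h := setmap t)) => [|A]; first exact/imset_inj/perm_inj.
by rewrite conjgE -!imset_comp; apply: eq_imset => x /=; rewrite !permM permK.
Qed.

Lemma vcyclesE (U : finType) (s : {perm U}) : vcycles s = norbits s [set: U].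
Proof.
rewrite /vcycles /norbits /porbits; apply: eq_card => O.
have E x : porbit s x = orbit_in s [set: U] x.
  by apply/setP => y; rewrite inE in_setT /=; apply/porbitP/fconnect_permP.
by apply/imsetP/imsetP => -[x _ ->]; exists x; rewrite ?in_setT ?E.
Qed.

Lemma theta'_max_ecycles (U : finType) (r : rel U) M :
  (forall s, is_aut r s -> s != 1%g -> ecycles r s <= M) ->
  (exists2 s, is_aut r s & s != 1%g /\ M <= ecycles r s) ->
  theta'_is r M.+1.
Proof.
move=> ecycles_le [s0 s0_aut [s0_nt M_le]]; split => // [c c_onto s s_aut c_inv | ].
  apply/eqP; apply: contraT => s_nt.
  have c_colors : [set: 'I_M.+1] \subset c @: edges r.
    by apply/subsetP => i _; have [X XE <-] := c_onto i; apply: imset_f.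
  suff : M < M by rewrite ltnn.
  rewrite -[M.+1]card_ord -cardsT (leq_trans (subset_leq_card c_colors)) //.
  apply: leq_trans (ecycles_le s s_aut s_nt).
  exact: (card_invariant_colors_le (imset_inj (@perm_inj _ s)) (aut_imset_edge s_aut)).
move=> j /andP[j_gt0 j_le] all_dist.
have j_le_s0 : 0 < j <= ecycles r s0 by rewrite j_gt0 (leq_trans _ M_le).
have [c [c_onto c_inv]] :=
  invariant_coloring (imset_inj (@perm_inj _ s0)) j_le_s0.
by move/eqP: s0_nt; apply; apply: all_dist c_onto s0 s0_aut c_inv.
Qed.

Section ProductPerms.
Variables (T : finType) (e : rel T).
Implicit Types al be : {perm T}.
Local Notation eP := (cart_prod e e).

Fact perm_pair_inj al be : injective (fun u : T * T => (al u.1, be u.2)).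
Proof. by move=> [x y] [x' y'] [/perm_inj -> /perm_inj ->]. Qed.
Definition perm_pair al be : {perm T * T} := perm (@perm_pair_inj al be).

Fact perm_swap_inj al be : injective (fun u : T * T => (be u.2, al u.1)).
Proof. by move=> [x y] [x' y'] [/perm_inj -> /perm_inj ->]. Qed.
Definition perm_swap al be : {perm T * T} := perm (@perm_swap_inj al be).

Lemma perm_pairE al be x y : perm_pair al be (x, y) = (al x, be y).
Proof. by rewrite permE. Qed.

Lemma perm_swapE al be x y : perm_swap al be (x, y) = (be y, al x).
Proof. by rewrite permE. Qed.

Lemma perm_pair_eq1 al be : (perm_pair al be == 1%g) = (al == 1%g) && (be == 1%g).
Proof.
apply/eqP/andP => [/permP pp1 | [/eqP -> /eqP ->]]; last first.
  by apply/permP => -[x y]; rewrite perm_pairE !perm1.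
by split; apply/eqP/permP => x; move: (pp1 (x, x)); rewrite perm_pairE !perm1 => -[].
Qed.

Lemma perm_pairX al be k : (perm_pair al be ^+ k)%g = perm_pair (al ^+ k) (be ^+ k).
Proof.
elim: k => [|k IH]; apply/permP => -[x y]; first by rewrite !expg0 perm1 perm_pairE !perm1.
by rewrite !expgSr permM IH !perm_pairE !permM.
Qed.

Lemma perm_swap11_sqr : (perm_swap 1 1 ^+ 2)%g = 1%g.
Proof. by apply/permP => -[x y]; rewrite expgS expg1 permM !perm_swapE !perm1. Qed.

Lemma perm_pair_conj_swap al be : (perm_pair al be ^ perm_swap 1 1)%g = perm_pair be al.
Proof.
have swV : (perm_swap 1 1)^-1%g = perm_swap 1 1.
  by apply/eqP; rewrite eq_invg_mul -expg2 perm_swap11_sqr.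
by apply/permP => -[x y]; rewrite conjgE swV !permM !perm_swapE !perm_pairE !perm_swapE !perm1.
Qed.

Lemma perm_pair_aut al be : is_aut e al -> is_aut e be -> is_aut eP (perm_pair al be).
Proof.
move=> al_aut be_aut; apply/is_autP => -[x y] [x' y'].
by rewrite !perm_pairE /cart_prod /= (autE _ _ al_aut) (autE _ _ be_aut)
  (inj_eq (@perm_inj _ al)) (inj_eq (@perm_inj _ be)).
Qed.

Lemma perm_swap_aut al be : is_aut e al -> is_aut e be -> is_aut eP (perm_swap al be).
Proof.
move=> al_aut be_aut; apply/is_autP => -[x y] [x' y'].
rewrite !perm_swapE /cart_prod /= (autE _ _ al_aut) (autE _ _ be_aut)
  (inj_eq (@perm_inj _ al)) (inj_eq (@perm_inj _ be)).
by rewrite orbC andbC [(x == x') && _]andbC.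
Qed.

End ProductPerms.

Lemma connect_invariant (U V : finType) (r : rel U) (g : U -> V) u w :
  (forall x y, r x y -> g x = g y) -> connect r u w -> g u = g w.
Proof.
by move=> g_inv /connectP[p + ->]; elim: p u => //= z p IH u /andP[/g_inv -> /IH].
Qed.

Section LayerImage.
Variables (T : finType) (e : rel T).
Hypotheses (e_simple : simple_graph e) (e_conn : connected_graph e).
Hypothesis e_prime : cart_prime e.
Let e_sym : symmetric e. Proof. by case: e_simple. Qed.
Let e_irr : irreflexive e. Proof. by case: e_simple. Qed.
Local Notation eP := (cart_prod e e).

Variables (phi : {perm T * T}) (y0 : T).
Hypothesis phi_aut : is_aut eP phi.

Let a x := (phi (x, y0)).1.
Let b x := (phi (x, y0)).2.

Let phiE x : phi (x, y0) = (a x, b x).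
Proof. exact: surjective_pairing. Qed.

Lemma adj_layer_image x x' : eP (a x, b x) (a x', b x') = e x x'.
Proof. by rewrite -!phiE autE // /cart_prod /= eqxx e_irr andbF orbF andbT. Qed.

Lemma layer_image_edge x x' : e x x' ->
  (e (a x) (a x') /\ b x = b x') \/ (a x = a x' /\ e (b x) (b x')).
Proof.
by rewrite -adj_layer_image /cart_prod /= => /orP[/andP[? /eqP ?]|/andP[/eqP ? ?]];
  [left | right].
Qed.

Let hstep x x' := e x x' && (b x == b x').
Let vstep x x' := e x x' && (a x == a x').

Lemma hstep_adj x x' : hstep x x' -> e (a x) (a x').
Proof.
case/andP=> xx' /eqP bx; case: (layer_image_edge xx') => [[]//|[_]].
by rewrite bx e_irr.
Qed.

Lemma vstep_adj x x' : vstep x x' -> e (b x) (b x').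
Proof.
case/andP=> xx' /eqP ax; case: (layer_image_edge xx') => [[]|[]//].
by rewrite ax e_irr.
Qed.

(* The preimage of the fourth corner of the square spanned by the images of
   [x], [y] and [q] is adjacent to both [(x, y0)] and [(q, y0)], hence lies
   in the layer of [y0] itself. *)
Lemma vstep_hstep_commute x y q : vstep x y -> hstep y q ->
  exists2 z, hstep x z & vstep z q.
Proof.
move=> vxy hyq; have bxy := vstep_adj vxy; have ayq := hstep_adj hyq.
move: vxy hyq => /andP[exy /eqP axy] /andP[eyq /eqP byq].
set z := (phi^-1)%g (a q, b x).
have phi_z : phi z = (a q, b x) by rewrite permKV.
have zx : eP z (x, y0).
  by rewrite -(autE _ _ phi_aut) phi_z phiE /cart_prod /= eqxx andbT axy e_sym ayq.
have zq : eP z (q, y0).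
  by rewrite -(autE _ _ phi_aut) phi_z phiE /cart_prod /= eqxx -byq bxy orbT.
move: zx zq phi_z; case: z => z1 z2; rewrite /cart_prod /=.
have [->|z2_ne] := eqVneq z2 y0; last first.
  rewrite !andbF /= => /andP[/eqP z1x _] /andP[/eqP z1q _].
  by move: ayq; rewrite -z1q z1x axy e_irr.
rewrite e_irr !andbT !andbF !orbF phiE => z1x z1q [az bz].
by exists z1; rewrite /hstep /vstep ?z1q ?az ?eqxx // e_sym z1x bz eqxx.
Qed.

Lemma vstep_path_commute p u z : vstep u z -> path hstep z p ->
  exists2 w, connect hstep u w & vstep w (last z p).
Proof.
elim: p u z => [|q p IH] u z vuz /=; first by exists u; rewrite ?connect0.
case/andP=> hzq hpath; have [z1 huz1 vz1q] := vstep_hstep_commute vuz hzq.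
have [w z1w vw] := IH _ _ vz1q hpath.
by exists w => //; apply: connect_trans z1w; apply: connect1.
Qed.

Lemma hstep_vstep_connect u v :
  exists2 w, connect hstep u w & connect vstep w v.
Proof.
have /connectP[p + ->] := e_conn u v.
elim: p u => [|z p IH] u /=; first by exists u; rewrite ?connect0.
case/andP=> euz /IH[w zw wv].
case: (layer_image_edge euz) => [[_ buz]|[auz _]].
  exists w => //; apply: connect_trans zw; apply: connect1.
  by rewrite /hstep euz buz eqxx.
have vuz : vstep u z by rewrite /vstep euz auz eqxx.
have /connectP[q hq w_last] := zw.
have [w' uw' vw'] := vstep_path_commute vuz hq.
by exists w' => //; apply: connect_trans wv; apply: connect1; rewrite w_last.
Qed.

Lemma layer_image_rectangle u v : exists w, a w = a v /\ b w = b u.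
Proof.
have [w uw wv] := hstep_vstep_connect u v; exists w; split.
  by apply: connect_invariant wv => x y /andP[_ /eqP].
by symmetry; apply: connect_invariant uw => x y /andP[_ /eqP].
Qed.

(* Otherwise [x |-> (a x, b x)] is an isomorphism from [G] onto the product
   of the subgraphs induced on the images of [a] and [b]. *)
Lemma layer_image_in_layer : (forall x x', b x = b x') \/ (forall x x', a x = a x').
Proof.
have [b_const|/forallPn[x1 /forallPn[x1' b_nc]]] := boolP [forall x, forall x', b x == b x'].
  by left => x x'; move/forallP: b_const => /(_ x)/forallP/(_ x')/eqP.
have [a_const|/forallPn[x2 /forallPn[x2' a_nc]]] := boolP [forall x, forall x', a x == a x'].
  by right => x x'; move/forallP: a_const => /(_ x)/forallP/(_ x')/eqP.
case: e_prime.
pose A := {z : T | z \in codom a}; pose B := {z : T | z \in codom b}.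
pose g z := (exist _ (a z) (codom_f a z) : A, exist _ (b z) (codom_f b z) : B).
exists A, B, (fun u v => e (val u) (val v)), (fun u v => e (val u) (val v)), g.
split; try by split => [u v | u]; [apply: e_sym | apply: e_irr].
- by rewrite card_sig; apply/card_gt1P; exists (a x2), (a x2'); rewrite !codom_f.
- by rewrite card_sig; apply/card_gt1P; exists (b x1), (b x1'); rewrite !codom_f.
split => [|z z']; last by rewrite -adj_layer_image /cart_prod /= -!val_eqE.
apply: inj_card_bij => [z z' /(congr1 (fun p => (val p.1, val p.2))) [az bz]|].
  suff : phi (z, y0) = phi (z', y0) by move/perm_inj => [].
  by rewrite !phiE az bz.
rewrite -cardsT -[X in _ <= X]cardsT (leq_trans _ (leq_imset_card g _)) //.
apply/subset_leq_card/subsetP => -[[pa pa_in] [pb pb_in]] _.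
have [[v av] [u bu]] := (codomP pa_in, codomP pb_in).
have [w [aw bw]] := layer_image_rectangle u v.
apply/imsetP; exists w; rewrite ?inE //.
by congr pair; apply: val_inj => /=; [rewrite av aw | rewrite bu bw].
Qed.

End LayerImage.

Section CartProdAut.
Variables (T : finType) (e : rel T).
Hypotheses (e_simple : simple_graph e) (e_conn : connected_graph e).
Hypotheses (e_prime : cart_prime e) (T_gt1 : 1 < #|T|).
Let e_irr : irreflexive e. Proof. by case: e_simple. Qed.
Local Notation eP := (cart_prod e e).
Let layer_in_layer := layer_image_in_layer e_simple e_conn e_prime.

Lemma exists_neq (y : T) : exists y', y' != y.
Proof.
have [u [v [_ _ uv]]] := card_gt1P T_gt1.
by have [<-|] := eqVneq u y; [exists v; rewrite eq_sym | exists u].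
Qed.

Lemma perm_pair_aut_inv al be : is_aut eP (perm_pair al be) -> is_aut e al /\ is_aut e be.
Proof.
move=> pp_aut; split; apply/is_autP => x x'.
  have := autE (x, x) (x', x) pp_aut.
  by rewrite !perm_pairE /cart_prod /= !eqxx !e_irr !andbT !andbF !orbF.
have := autE (x, x) (x, x') pp_aut.
by rewrite !perm_pairE /cart_prod /= !eqxx !e_irr.
Qed.

Lemma column_image_in_layer (phi : {perm T * T}) x0 : is_aut eP phi ->
  (forall y y', (phi (x0, y)).2 = (phi (x0, y')).2) \/
  (forall y y', (phi (x0, y)).1 = (phi (x0, y')).1).
Proof.
move=> phi_aut; have sw_aut := perm_swap_aut (is_aut1 e) (is_aut1 e).
have [] := layer_in_layer x0 (is_autM sw_aut phi_aut) => layer_eq;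
  [left | right] => y y'; have := layer_eq y y'; by rewrite !permM !perm_swapE !perm1.
Qed.

Section RowToRow.
Variables (phi : {perm T * T}) (y0 : T).
Hypothesis phi_aut : is_aut eP phi.
Hypothesis row_y0 : forall x x', (phi (x, y0)).2 = (phi (x', y0)).2.

Let a0 x := (phi (x, y0)).1.

Fact a0_inj : injective a0.
Proof.
move=> x x' ax; suff : phi (x, y0) = phi (x', y0) by move/perm_inj => [].
rewrite [LHS]surjective_pairing [RHS]surjective_pairing -/(a0 x) -/(a0 x').
by rewrite ax (row_y0 x x').
Qed.

Let pa := perm a0_inj.

(* A column mapped into a row would meet the image of the row of [y0],
   which already covers that whole row since [a0] is onto. *)
Lemma column_to_column x y y' : (phi (x, y)).1 = (phi (x, y')).1.
Proof.
case: (column_image_in_layer x phi_aut) => // col_row; exfalso.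
have [y1 y1_ne] := exists_neq y0.
pose x' := (pa^-1)%g (phi (x, y1)).1.
suff : phi (x', y0) = phi (x, y1) by move/perm_inj => [_ y1E]; rewrite y1E eqxx in y1_ne.
rewrite [LHS]surjective_pairing [RHS]surjective_pairing.
have -> : (phi (x', y0)).1 = pa x' by rewrite permE.
by rewrite /x' permKV (row_y0 x' x) (col_row y0 y1).
Qed.

Lemma row_to_row y x x' : (phi (x, y)).2 = (phi (x', y)).2.
Proof.
case: (layer_in_layer y phi_aut) => // row_col; exfalso.
have [x1 x1_ne] := exists_neq x.
suff : phi (x1, y0) = phi (x, y0) by move/perm_inj => [x1E]; rewrite x1E eqxx in x1_ne.
rewrite [LHS]surjective_pairing [RHS]surjective_pairing (row_y0 x1 x).
by rewrite (column_to_column x1 y0 y) (row_col x1 x) (column_to_column x y y0).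
Qed.

Let b0 y := (phi (y0, y)).2.

Fact b0_inj : injective b0.
Proof.
move=> y y' by'; suff : phi (y0, y) = phi (y0, y') by move/perm_inj => [].
rewrite [LHS]surjective_pairing [RHS]surjective_pairing -/(b0 y) -/(b0 y').
by rewrite by' (column_to_column y0 y y').
Qed.

Lemma aut_row_to_row :
  exists al be, [/\ is_aut e al, is_aut e be & phi = perm_pair al be].
Proof.
have phiE : phi = perm_pair pa (perm b0_inj).
  apply/permP => -[x y]; rewrite perm_pairE !permE /a0 /b0 [LHS]surjective_pairing.
  by rewrite (column_to_column x y y0) (row_to_row y x y0).
move: phi_aut; rewrite phiE => /perm_pair_aut_inv[pa_aut pb_aut].
by exists pa, (perm b0_inj).
Qed.

End RowToRow.

Lemma aut_cart_prodP (phi : {perm T * T}) : is_aut eP phi ->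
  exists al be, [/\ is_aut e al, is_aut e be &
    phi = perm_pair al be \/ phi = perm_swap al be].
Proof.
move=> phi_aut; have /card_gt1P[y0 _] := T_gt1.
have [row_y0|row_col] := layer_in_layer y0 phi_aut.
  have [al [be [al_aut be_aut phiE]]] := aut_row_to_row phi_aut row_y0.
  by exists al, be; split => //; left.
have sw_aut := perm_swap_aut (is_aut1 e) (is_aut1 e).
set psi := (phi * perm_swap 1 1)%g.
have psi_row x x' : (psi (x, y0)).2 = (psi (x', y0)).2.
  rewrite !permM [phi (x, y0)]surjective_pairing [phi (x', y0)]surjective_pairing.
  by rewrite !perm_swapE !perm1 (row_col x x').
have [al [be [al_aut be_aut psiE]]] := aut_row_to_row (is_autM phi_aut sw_aut) psi_row.
exists al, be; split => //; right; apply/permP => -[x y]; rewrite perm_swapE.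
move/permP/(_ (x, y)): psiE; rewrite permM [phi (x, y)]surjective_pairing.
by rewrite perm_swapE perm_pairE !perm1 => -[<- <-].
Qed.

End CartProdAut.

Section CartProdEdges.
Variables (T : finType) (e : rel T).
Hypothesis e_simple : simple_graph e.
Let e_irr : irreflexive e. Proof. by case: e_simple. Qed.
Local Notation eP := (cart_prod e e).
Local Notation n := #|T|.
Local Notation m := #|edges e|.
Implicit Types (al be : {perm T}) (X Y : {set T}).

Definition hedge X (y : T) : {set T * T} := [set (x, y) | x in X].
Definition vedge (x : T) Y : {set T * T} := [set (x, y) | y in Y].

Lemma hedge_edge X y : X \in edges e -> hedge X y \in edges eP.
Proof.
case/edgesP=> [x [x' [xx' ->]]]; apply/edgesP; exists (x, y), (x', y).
by rewrite /hedge imset_set2 /cart_prod /= xx' eqxx.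
Qed.

Lemma vedge_edge x Y : Y \in edges e -> vedge x Y \in edges eP.
Proof.
case/edgesP=> [y [y' [yy' ->]]]; apply/edgesP; exists (x, y), (x, y').
by rewrite /vedge imset_set2 /cart_prod /= yy' eqxx orbT.
Qed.

Lemma cart_prod_edgeP Z : Z \in edges eP ->
  (exists X y, X \in edges e /\ Z = hedge X y) \/
  (exists x Y, Y \in edges e /\ Z = vedge x Y).
Proof.
case/edgesP=> [[x y] [[x' y'] []]]; rewrite /cart_prod /=.
case/orP=> [/andP[xx' /eqP <-] | /andP[/eqP <- yy']] ->.
  left; exists [set x; x'], y; split; first by apply/edgesP; exists x, x'.
  by rewrite /hedge imset_set2.
right; exists x, [set y; y']; split; first by apply/edgesP; exists y, y'.
by rewrite /vedge imset_set2.
Qed.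

Lemma hedge_inj X X' y y' : X \in edges e -> hedge X y = hedge X' y' -> X = X' /\ y = y'.
Proof.
move=> /edgesP[x [x' [_ XE]]] hE.
have fst_hedge Z w : [set u.1 | u in hedge Z w] = Z.
  by rewrite -imset_comp imset_id.
split; first by rewrite -(fst_hedge X y) hE fst_hedge.
have : (x, y) \in hedge X' y' by rewrite -hE imset_f // XE !inE eqxx.
by case/imsetP => ? _ [].
Qed.

Lemma vedge_inj x x' Y Y' : Y \in edges e -> vedge x Y = vedge x' Y' -> x = x' /\ Y = Y'.
Proof.
move=> /edgesP[y [y' [_ YE]]] vE.
have snd_vedge w Z : [set u.2 | u in vedge w Z] = Z.
  by rewrite -imset_comp imset_id.
split; last by rewrite -(snd_vedge x Y) vE snd_vedge.
have : (x, y) \in vedge x' Y' by rewrite -vE imset_f // YE !inE eqxx.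
by case/imsetP => ? _ [].
Qed.

Lemma hedge_neq_vedge X y x Y : X \in edges e -> hedge X y <> vedge x Y.
Proof.
move=> /edgesP[x1 [x2 [x12 ->]]] hE.
have /imsetP[? _ [x1E _]] : (x1, y) \in vedge x Y by rewrite -hE imset_f ?inE ?eqxx.
have /imsetP[? _ [x2E _]] : (x2, y) \in vedge x Y by rewrite -hE imset_f ?inE ?eqxx ?orbT.
by rewrite x1E x2E e_irr in x12.
Qed.

Lemma perm_pair_hedge al be X y : perm_pair al be @: hedge X y = hedge (al @: X) (be y).
Proof. by rewrite /hedge -!imset_comp; apply: eq_imset => x /=; rewrite perm_pairE. Qed.

Lemma perm_pair_vedge al be x Y : perm_pair al be @: vedge x Y = vedge (al x) (be @: Y).
Proof. by rewrite /vedge -!imset_comp; apply: eq_imset => y /=; rewrite perm_pairE. Qed.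

Lemma perm_swap_hedge al be X y : perm_swap al be @: hedge X y = vedge (be y) (al @: X).
Proof. by rewrite /hedge /vedge -!imset_comp; apply: eq_imset => x /=; rewrite perm_swapE. Qed.

Lemma perm_swap_vedge al be x Y : perm_swap al be @: vedge x Y = hedge (be @: Y) (al x).
Proof. by rewrite /hedge /vedge -!imset_comp; apply: eq_imset => y /=; rewrite perm_swapE. Qed.

Lemma card_hedges (A : {set {set T}}) (B : {set T}) : A \subset edges e ->
  #|[set hedge X y | X in A, y in B]| = #|A| * #|B|.
Proof.
move=> sAE; rewrite curry_imset2X card_in_imset ?cardsX // => -[X y] [X' y'].
by move=> /setXP[XA _] _ /(hedge_inj (subsetP sAE _ XA)) [/= -> ->].
Qed.

Lemma card_vedges (A : {set T}) (B : {set {set T}}) : B \subset edges e ->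
  #|[set vedge x Y | x in A, Y in B]| = #|A| * #|B|.
Proof.
move=> sBE; rewrite curry_imset2X card_in_imset ?cardsX // => -[x Y] [x' Y'].
by move=> /setXP[_ YB] _ /(vedge_inj (subsetP sBE _ YB)) [/= -> ->].
Qed.

(* These edges meet every edge orbit of [perm_pair al be], and lie in pairwise
   distinct orbits when [be = 1]. *)
Definition pair_orbit_reps al : {set {set T * T}} :=
  [set hedge X y | X in orbit_reps (setmap al) (edges e), y in [set: T]] :|:
  [set vedge x Y | x in orbit_reps al [set: T], Y in edges e].

Lemma card_pair_orbit_reps al : is_aut e al ->
  #|pair_orbit_reps al| = ecycles e al * n + vcycles al * m.
Proof.
move=> al_aut; rewrite cardsU.
have -> : [set hedge X y | X in orbit_reps (setmap al) (edges e), y in [set: T]] :&: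
          [set vedge x Y | x in orbit_reps al [set: T], Y in edges e] = set0.
  apply/setP => Z; rewrite !inE.
  apply/andP => -[/imset2P[X y XR _ ->] /imset2P[x Y _ _]].
  exact: hedge_neq_vedge (subsetP (orbit_reps_sub _ _) _ XR).
rewrite cards0 subn0 card_hedges ?orbit_reps_sub // card_vedges // !cardsT.
rewrite ecyclesE vcyclesE (card_orbit_reps (imset_inj perm_inj) (aut_imset_edge al_aut)).
by rewrite (card_orbit_reps (@perm_inj _ al)).
Qed.

Lemma ecycles_perm_pair_le al be : is_aut e al -> is_aut e be ->
  ecycles eP (perm_pair al be) <= #|pair_orbit_reps al|.
Proof.
move=> al_aut be_aut; apply: (norbits_le (imset_inj (@perm_inj _ _))).
move=> _ /cart_prod_edgeP[[X [y [XE ->]]] | [x [Y [YE ->]]]].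
  have [R R_rep /fconnect_setmapP[k ->]] :=
    orbit_repsP (imset_inj (@perm_inj _ al)) (aut_imset_edge al_aut) XE.
  exists (hedge R ((be ^+ k)^-1%g y)); first by rewrite in_setU imset2_f ?in_setT.
  by apply/fconnect_setmapP; exists k; rewrite perm_pairX perm_pair_hedge permKV.
have [x0 x0_rep /fconnect_permP[k ->]] :=
  orbit_repsP (@perm_inj _ al) (fun x _ => in_setT (al x)) (in_setT x).
exists (vedge x0 ((be ^+ k)^-1%g @: Y)).
  by rewrite in_setU imset2_f ?orbT // aut_imset_edge // is_autV ?is_autX.
by apply/fconnect_setmapP; exists k; rewrite perm_pairX perm_pair_vedge imset_permKV.
Qed.

Lemma ecycles_perm_pair1_ge al : is_aut e al ->
  #|pair_orbit_reps al| <= ecycles eP (perm_pair al 1).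
Proof.
move=> al_aut; apply: norbits_ge => [|d d'].
  apply/subsetP => _ /setUP[/imset2P[X y XR _ ->] | /imset2P[x Y _ YE ->]].
    exact: hedge_edge (subsetP (orbit_reps_sub _ _) _ XR).
  exact: vedge_edge.
case/setUP => [/imset2P[X y XR _ ->] | /imset2P[x Y xR YE ->]];
  case/setUP => [/imset2P[X' y' XR' _ ->] | /imset2P[x' Y' xR' YE' ->]];
  case/fconnect_setmapP => k;
  rewrite perm_pairX expg1n ?perm_pair_hedge ?perm_pair_vedge ?perm1 ?imset_perm1.
- have XE' := subsetP (orbit_reps_sub _ _) _ XR'.
  case/(hedge_inj XE') => X'E ->; congr hedge.
  apply: (orbit_reps_uniq (imset_inj perm_inj) XR XR').
  by apply/fconnect_setmapP; exists k.
- move=> /esym/hedge_neq_vedge[].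
  exact: aut_imset_edge (is_autX k al_aut) _ (subsetP (orbit_reps_sub _ _) _ XR).
- by move=> /hedge_neq_vedge[]; apply: (subsetP (orbit_reps_sub _ _) _ XR').
- case/(vedge_inj YE') => x'E ->; congr vedge.
  apply: (orbit_reps_uniq (@perm_inj _ al) xR xR').
  by apply/fconnect_permP; exists k.
Qed.

Definition all_vedges : {set {set T * T}} := [set vedge x Y | x in [set: T], Y in edges e].

Lemma card_all_vedges : #|all_vedges| = n * m.
Proof. by rewrite card_vedges ?cardsT. Qed.

Lemma ecycles_perm_swap_le al be : is_aut e al -> is_aut e be ->
  ecycles eP (perm_swap al be) <= n * m.
Proof.
move=> al_aut be_aut; rewrite -card_all_vedges.
apply: (norbits_le (imset_inj (@perm_inj _ _))).
move=> _ /cart_prod_edgeP[[X [y [XE ->]]] | [x [Y [YE ->]]]].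
  exists (vedge (be y) (al @: X)); first by rewrite imset2_f ?in_setT ?aut_imset_edge.
  by rewrite (fconnect_sym (imset_inj (@perm_inj _ _))) -perm_swap_hedge fconnect1.
by exists (vedge x Y); rewrite ?imset2_f ?in_setT ?connect0.
Qed.

Lemma ecycles_perm_swap11_ge : n * m <= ecycles eP (perm_swap 1 1).
Proof.
rewrite -card_all_vedges; apply: norbits_ge => [|d d'].
  by apply/subsetP => _ /imset2P[x Y _ YE ->]; apply: vedge_edge.
case/imset2P => x Y _ YE -> /imset2P[x' Y' _ YE' ->] /fconnect_setmapP[k].
rewrite -(expg_mod _ (perm_swap11_sqr T)) modn2.
case: (odd k); rewrite ?expg0 ?imset_perm1 //.
by rewrite expg1 perm_swap_vedge imset_perm1 => /esym/hedge_neq_vedge[].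
Qed.

End CartProdEdges.

Section CartSquareCycles.
Variables (T : finType) (e : rel T).
Hypotheses (e_simple : simple_graph e) (e_conn : connected_graph e).
Hypotheses (e_prime : cart_prime e) (T_gt1 : 1 < #|T|).
Local Notation eP := (cart_prod e e).
Local Notation n := #|T|.
Local Notation m := #|edges e|.

Lemma r_param_ge al : is_aut e al -> al != 1%g ->
  ecycles e al * n + vcycles al * m <= r_param e.
Proof.
move=> al_aut al_nt.
by apply: (leq_bigmax_cond (P := fun s => is_aut e s && (s != 1%g))); rewrite al_aut.
Qed.

Lemma r_param_attained : 0 < r_param e ->
  exists2 al, is_aut e al && (al != 1%g) & r_param e = ecycles e al * n + vcycles al * m.
Proof.
move=> r_gt0; pose P := [pred s : {perm T} | is_aut e s && (s != 1%g)].
have P_gt0 : 0 < #|P|.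
  rewrite lt0n; apply: contraTneq r_gt0 => /card0_eq P0.
  by rewrite /r_param big_pred0 // => s; apply: P0.
have [al Pal r_eq] := eq_bigmax_cond (fun s => ecycles e s * n + vcycles s * m) P_gt0.
by exists al.
Qed.

Lemma ecycles_perm_pair_le_r_param al be : is_aut e al -> is_aut e be -> al != 1%g ->
  ecycles eP (perm_pair al be) <= r_param e.
Proof.
move=> al_aut be_aut al_nt; rewrite (leq_trans (ecycles_perm_pair_le al_aut be_aut)) //.
by rewrite card_pair_orbit_reps // r_param_ge.
Qed.

Lemma ecycles_cart_prod_le phi : is_aut eP phi -> phi != 1%g ->
  ecycles eP phi <= maxn (n * m) (r_param e).
Proof.
move=> phi_aut phi_nt; rewrite leq_max.
have [al [be [al_aut be_aut [phiE | phiE]]]] :=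
  aut_cart_prodP e_simple e_conn e_prime T_gt1 phi_aut; rewrite phiE;
  last by rewrite ecycles_perm_swap_le.
have [al1 | al_nt] := eqVneq al 1%g; last by rewrite ecycles_perm_pair_le_r_param ?orbT.
have be_nt : be != 1%g by move: phi_nt; rewrite phiE perm_pair_eq1 al1 eqxx.
have sw_aut := perm_swap_aut (is_aut1 e) (is_aut1 e).
by rewrite -perm_pair_conj_swap ecycles_conjg // ecycles_perm_pair_le_r_param ?orbT.
Qed.

Lemma ecycles_cart_prod_attained :
  exists2 phi, is_aut eP phi & phi != 1%g /\ maxn (n * m) (r_param e) <= ecycles eP phi.
Proof.
have [_ | lt_r] := leqP (r_param e) (n * m).
  exists (perm_swap 1 1); first exact: perm_swap_aut (is_aut1 e) (is_aut1 e).
  split; last exact: ecycles_perm_swap11_ge.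
  have /card_gt1P[x [y [_ _ xy]]] := T_gt1.
  apply/eqP => /permP/(_ (x, y)); rewrite perm_swapE !perm1 => -[yx _].
  by rewrite yx eqxx in xy.
have [al /andP[al_aut al_nt] r_eq] := r_param_attained (leq_ltn_trans (leq0n _) lt_r).
exists (perm_pair al 1); first exact: perm_pair_aut al_aut (is_aut1 e).
split; first by rewrite perm_pair_eq1 (negbTE al_nt).
by rewrite r_eq -card_pair_orbit_reps // ecycles_perm_pair1_ge.
Qed.

End CartSquareCycles.

Theorem mainTheorem10 (T : finType) (e : rel T) :
  simple_graph e -> connected_graph e -> cart_prime e -> 1 < #|T| ->
  theta'_is (cart_prod e e)
    (maxn (#|T| * #|edges e|) (r_param e)).+1.
Proof.
move=> e_simple e_conn e_prime T_gt1; apply: theta'_max_ecycles.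
  exact: ecycles_cart_prod_le.
exact: ecycles_cart_prod_attained.
Qed.
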